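(* Let $(u,z,\mathcal R)$ be a (sufficiently regular) solution of the linearized system \[ \partial_tu=\bar\kappa\Delta_yu-\Big(1-\frac1\gamma\Big)\dot z,\ \ u(1,t)=0,\qquad z=\frac1{R_gT_\infty}\Big(-\frac{2\sigma}{R_*^2}\mathcal R+\frac{4\mu_l}{R_*}\dot{\mathcal R}+\rho_lR_*\ddot{\mathcal R}\Big),\qquad \int_{B_1}u\,dx=-\frac{4\pi}3z-4\pi\frac{\rho_*}{R_*}\mathcal R. \] Then, with \[ \mathcal E^L_{\rm total}=-4\pi\sigma\mathcal R^2-4\pi R_gT_\infty R_*^2\mathcal Rz-\frac{2\pi R_gT_\infty R_*^3}{3\rho_*}z^2+\frac{c_v\gamma T_\infty R_*^3}{2\rho_*}\int_{B_1}u^2dx+2\pi\rho_lR_*^3\dot{\mathcal R}^2, \] one has \[ \frac{d}{dt}\mathcal E^L_{\rm total}=-\frac{\kappa T_\infty}{\rho_*^2}R_*\int_{B_1}|\nabla_yu|^2dx-16\pi\mu_lR_*\dot{\mathcal R}^2. \]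
   Context: Parameters: $\kappa>0$, $\gamma>1$, $c_v>0$, $R_g>0$ with $c_p=\gamma c_v=c_v+R_g$; $T_\infty>0$, $p_{\infty,*}>0$, $\sigma>0$, $\mu_l\ge0$, $\rho_l>0$; $\rho_*,R_*>0$ with $R_gT_\infty\rho_*=p_{\infty,*}+2\sigma/R_*$; $\bar\kappa=\kappa/(c_p\rho_*R_*^2)$. $B_1$ is the unit ball of $\mathbb R^3$, $u(y,t)$ is identified with the radial function $u(|x|,t)$, $\Delta_y$ the radial Laplacian $y^{-2}\partial_y(y^2\partial_y)$ and $\nabla_y$ the gradient in $x$. *)

From Stdlib Require Import Reals.
From Coquelicot Require Import Coquelicot.
Open Scope R_scope.

(* Integral over the unit ball B_1 of R^3 of the radial function x |-> f(|x|),
   written in spherical coordinates: 4 pi * int_0^1 f(y) y^2 dy. *)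
Definition ball_int (f : R -> R) : R :=
  4 * PI * RInt (fun y => f y * y ^ 2) 0 1.

Definition radial_laplacian (w : R -> R) (y : R) : R :=
  / (y ^ 2) * Derive (fun s => s ^ 2 * Derive w s) y.

Definition radial_grad_sq (w : R -> R) (y : R) : R := (Derive w y) ^ 2.

From Stdlib Require Import Reals Lra.
From Coquelicot Require Import Coquelicot.
Open Scope R_scope.

(* Differentiating under the integral sign, d/dt int u^2 = 2 int u u_t.  Inserting the
   heat equation and integrating by parts (the flux y^2 u_y vanishes at y = 0 and u
   vanishes at y = 1) gives int u u_t = - kbar int |grad u|^2 - (1 - 1/gamma) z' int u.
   The mass constraint turns int u into a combination of z and R, whose z'-terms cancel
   those of the R z and z^2 parts of the energy; by the relation defining z, the
   remaining terms in R' collapse to - 16 pi mu_l R_* R'^2. *)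

Section ContinuousR.
Context {U : UniformSpace}.

Lemma continuous_Rplus (f g : U -> R) x :
  continuous f x -> continuous g x -> continuous (fun y => f y + g y) x.
Proof. exact (@continuous_plus U R_AbsRing R_NormedModule f g x). Qed.

Lemma continuous_Rmult (f g : U -> R) x :
  continuous f x -> continuous g x -> continuous (fun y => f y * g y) x.
Proof. exact (@continuous_mult U R_AbsRing f g x). Qed.

Lemma continuous_Rpow (f : U -> R) (n : nat) x :
  continuous f x -> continuous (fun y => f y ^ n) x.
Proof.
intros Hf. induction n as [|n IH]; simpl.
- apply continuous_const.
- now apply continuous_Rmult.
Qed.

End ContinuousR.

Lemma continuous_slice_l (f : R -> R -> R) x y :
  continuous (fun p : R * R => f (fst p) (snd p)) (x, y) ->
  continuous (fun a => f a y) x.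
Proof.
intros H. apply (continuous_comp_2 (fun a => a) (fun _ => y) f); auto.
- apply continuous_id.
- apply continuous_const.
Qed.

Lemma is_derive_continuous (f : R -> R) x l : is_derive f x l -> continuous f x.
Proof.
intros Hf. apply (@ex_derive_continuous R_AbsRing R_NormedModule). now exists l.
Qed.

Lemma continuity_2d_pt_swap (f : R -> R -> R) x y :
  continuity_2d_pt f x y -> continuity_2d_pt (fun a b => f b a) y x.
Proof.
intros H eps. destruct (H eps) as [d Hd].
exists d. intros a b Ha Hb. now apply Hd.
Qed.

Lemma locally_open_interval a b x : a < x < b -> locally x (fun s => a < s < b).
Proof. intros Hx. now apply (open_and _ _ (open_gt a) (open_lt b)). Qed.

Lemma locally_2d_open_interval a b x y :
  a < x < b -> locally_2d (fun s (_ : R) => a < s < b) x y.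
Proof.
intros Hx. destruct (locally_open_interval a b x Hx) as [d Hd].
exists d. intros s v Hs _. now apply Hd.
Qed.

Lemma ex_RInt_continuous_01 (f : R -> R) :
  (forall y, 0 <= y <= 1 -> continuous f y) -> ex_RInt f 0 1.
Proof.
intros Hf. apply (@ex_RInt_continuous R_CompleteNormedModule). intros y Hy.
rewrite Rmin_left, Rmax_right in Hy by lra. now apply Hf.
Qed.

Lemma RInt_lincomb (f g : R -> R) (p q a b : R) :
  ex_RInt f a b -> ex_RInt g a b ->
  RInt (fun y => p * f y + q * g y) a b = p * RInt f a b + q * RInt g a b.
Proof.
intros Hf Hg. apply is_RInt_unique.
exact (is_RInt_plus _ _ a b _ _
         (is_RInt_scal _ a b p _ (@RInt_correct R_CompleteNormedModule f a b Hf))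
         (is_RInt_scal _ a b q _ (@RInt_correct R_CompleteNormedModule g a b Hg))).
Qed.

Lemma is_derive_ball_int_param (f df : R -> R -> R) (ta tb t : R) :
  (forall y s, ta < s < tb -> is_derive (fun r => f y r) s (df y s)) ->
  (forall y s, 0 <= y <= 1 -> ta < s < tb -> continuous (fun a => f a s) y) ->
  (forall y, 0 <= y <= 1 -> continuous (fun p : R * R => df (fst p) (snd p)) (y, t)) ->
  ta < t < tb ->
  is_derive (fun s => ball_int (fun y => f y s)) t (ball_int (fun y => df y t)).
Proof.
intros Hdf Hf Hdf_cont Ht. unfold ball_int. apply is_derive_scal.
assert (Hweighted : forall y s, ta < s < tb ->
          is_derive (fun r => f y r * y ^ 2) s (df y s * y ^ 2)).
{ intros y s Hs.
  exact (@is_derive_scal_l R_AbsRing R_NormedModule _ s _ (y ^ 2) (Hdf y s Hs)). }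
replace (RInt (fun y => df y t * y ^ 2) 0 1)
  with (RInt (fun y => Derive (fun s => f y s * y ^ 2) t) 0 1).
2:{ apply RInt_ext. intros y _. now apply is_derive_unique, Hweighted. }
apply (is_derive_RInt_param (fun s y => f y s * y ^ 2)).
- apply (filter_imp (fun s => ta < s < tb)); [| now apply locally_open_interval].
  intros s Hs y _. eexists. now apply Hweighted.
- intros y Hy. rewrite Rmin_left, Rmax_right in Hy by lra.
  apply continuity_2d_pt_ext_loc with (f := fun s y => df y s * y ^ 2).
  + apply (locally_2d_impl (fun s (_ : R) => ta < s < tb)).
    * apply locally_2d_forall. intros s y' Hs.
      symmetry. now apply is_derive_unique, Hweighted.
    * now apply locally_2d_open_interval.
  + apply (continuity_2d_pt_swap (fun y s => df y s * y ^ 2)).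
    apply continuity_2d_pt_filterlim.
    apply (continuous_Rmult (fun p : R * R => df (fst p) (snd p)) (fun p => fst p ^ 2)).
    * now apply Hdf_cont.
    * apply continuous_Rpow, continuous_fst.
- apply (filter_imp (fun s => ta < s < tb)); [| now apply locally_open_interval].
  intros s Hs. apply ex_RInt_continuous_01. intros y Hy.
  apply continuous_Rmult.
  + now apply Hf.
  + apply continuous_Rpow, continuous_id.
Qed.

Lemma is_derive_ball_int_sqr (u ut : R -> R -> R) (ta tb t : R) :
  (forall y s, ta < s < tb -> is_derive (fun r => u y r) s (ut y s)) ->
  (forall y s, ta < s < tb -> continuous (fun p : R * R => u (fst p) (snd p)) (y, s)) ->
  (forall y s, ta < s < tb -> continuous (fun p : R * R => ut (fst p) (snd p)) (y, s)) ->
  ta < t < tb ->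
  is_derive (fun s => ball_int (fun y => u y s ^ 2)) t
    (ball_int (fun y => 2 * u y t * ut y t)).
Proof.
intros Hut Hu_cont Hut_cont Ht.
apply (is_derive_ball_int_param (fun y s => u y s ^ 2) (fun y s => 2 * u y s * ut y s) ta tb);
  [| | | exact Ht].
- intros y s Hs.
  replace (2 * u y s * ut y s) with (INR 2 * ut y s * u y s ^ Nat.pred 2) by (simpl; ring).
  now apply (is_derive_pow (fun r => u y r)), Hut.
- intros y s _ Hs. now apply continuous_Rpow, (continuous_slice_l u), Hu_cont.
- intros y _. apply continuous_Rmult; [apply continuous_Rmult |].
  + apply continuous_const.
  + now apply Hu_cont.
  + now apply Hut_cont.
Qed.

Lemma radial_green_identity (U Uy G : R -> R) :
  (forall y, 0 <= y <= 1 -> is_derive U y (Uy y)) ->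
  (forall y, 0 <= y <= 1 -> continuous Uy y) ->
  (forall y, 0 <= y <= 1 -> is_derive (fun s => s ^ 2 * Uy s) y (G y)) ->
  (forall y, 0 <= y <= 1 -> continuous G y) ->
  U 1 = 0 ->
  RInt (fun y => U y * G y) 0 1 = - RInt (fun y => Uy y ^ 2 * y ^ 2) 0 1.
Proof.
intros HU HUy Hflux HG Hbc.
assert (HUc : forall y, 0 <= y <= 1 -> continuous U y).
{ intros y Hy. eapply is_derive_continuous. now apply HU. }
assert (Hparts : is_RInt (fun y => plus (Uy y ^ 2 * y ^ 2) (U y * G y)) 0 1
                   (minus (U 1 * (1 ^ 2 * Uy 1)) (U 0 * (0 ^ 2 * Uy 0)))).
{ apply (is_RInt_derive (fun y => U y * (y ^ 2 * Uy y))).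
  - intros y Hy. rewrite Rmin_left, Rmax_right in Hy by lra.
    replace (plus (Uy y ^ 2 * y ^ 2) (U y * G y))
      with (plus (mult (Uy y) (y ^ 2 * Uy y)) (mult (U y) (G y)))
      by (unfold plus, mult; simpl; ring).
    apply (is_derive_mult U (fun s => s ^ 2 * Uy s)); auto. apply Rmult_comm.
  - intros y Hy. rewrite Rmin_left, Rmax_right in Hy by lra.
    apply continuous_Rplus; apply continuous_Rmult; auto.
    + now apply continuous_Rpow, HUy.
    + apply continuous_Rpow, continuous_id. }
assert (HA : ex_RInt (fun y => Uy y ^ 2 * y ^ 2) 0 1).
{ apply ex_RInt_continuous_01. intros y Hy.
  apply continuous_Rmult; apply continuous_Rpow; [now apply HUy | apply continuous_id]. }
assert (HB : ex_RInt (fun y => U y * G y) 0 1).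
{ apply ex_RInt_continuous_01. intros y Hy. apply continuous_Rmult; auto. }
pose proof (is_RInt_unique _ _ _ _ Hparts) as Hvalue.
rewrite (RInt_plus (V := R_CompleteNormedModule)), Hbc in Hvalue by assumption.
change (RInt (fun y => Uy y ^ 2 * y ^ 2) 0 1 + RInt (fun y => U y * G y) 0 1
        = 0 * (1 ^ 2 * Uy 1) - U 0 * (0 ^ 2 * Uy 0)) in Hvalue.
lra.
Qed.

(* The equation expresses the flux derivative through [Ut], which makes it continuous
   up to the centre [y = 0] without assuming continuity of [Uyy]. *)
Lemma is_derive_radial_flux_heat (U Uy Uyy Ut : R -> R) (k c : R) :
  k <> 0 ->
  (forall y, is_derive U y (Uy y)) ->
  (forall y, is_derive Uy y (Uyy y)) ->
  (forall y, 0 < y <= 1 -> Ut y = k * radial_laplacian U y - c) ->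
  forall y, 0 <= y <= 1 ->
  is_derive (fun s => s ^ 2 * Uy s) y (y ^ 2 * (Ut y + c) / k).
Proof.
intros Hk HU HUy Hheat y Hy.
assert (Hprod : is_derive (fun s => s ^ 2 * Uy s) y (2 * y * Uy y + y ^ 2 * Uyy y)).
{ assert (Hex : ex_derive Uy y) by (eexists; apply HUy).
  auto_derive; [exact Hex |].
  change (Derive (fun s => Uy s) y) with (Derive Uy y).
  rewrite (is_derive_unique _ _ _ (HUy y)). ring. }
replace (y ^ 2 * (Ut y + c) / k) with (2 * y * Uy y + y ^ 2 * Uyy y); [exact Hprod |].
destruct (Req_dec y 0) as [-> | Hy0].
- field. exact Hk.
- rewrite Hheat by lra. unfold radial_laplacian.
  replace (Derive (fun s => s ^ 2 * Derive U s) y) with (2 * y * Uy y + y ^ 2 * Uyy y).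
  + field. split; [exact Hy0 | exact Hk].
  + symmetry.
    rewrite (Derive_ext _ (fun s => s ^ 2 * Uy s)) by (intros s; now rewrite (is_derive_unique _ _ _ (HU s))).
    now apply is_derive_unique.
Qed.

Lemma ball_int_heat_dissipation (U Uy Uyy Ut : R -> R) (k c : R) :
  k <> 0 ->
  (forall y, is_derive U y (Uy y)) ->
  (forall y, is_derive Uy y (Uyy y)) ->
  (forall y, 0 <= y <= 1 -> continuous Ut y) ->
  U 1 = 0 ->
  (forall y, 0 < y <= 1 -> Ut y = k * radial_laplacian U y - c) ->
  ball_int (fun y => 2 * U y * Ut y)
  = - 2 * k * ball_int (radial_grad_sq U) - 2 * c * ball_int U.
Proof.
intros Hk HU HUy HUt Hbc Hheat.
set (G := fun y => y ^ 2 * (Ut y + c) / k).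
assert (HUc : forall y, continuous U y) by (intros y; eapply is_derive_continuous, HU).
assert (HGc : forall y, 0 <= y <= 1 -> continuous G y).
{ intros y Hy. unfold G, Rdiv.
  apply continuous_Rmult; [apply continuous_Rmult |].
  - apply continuous_Rpow, continuous_id.
  - apply continuous_Rplus; [now apply HUt | apply continuous_const].
  - apply continuous_const. }
assert (Hgreen : RInt (fun y => U y * G y) 0 1 = - RInt (fun y => Uy y ^ 2 * y ^ 2) 0 1).
{ apply radial_green_identity; auto.
  - intros y _. eapply is_derive_continuous, HUy.
  - exact (is_derive_radial_flux_heat U Uy Uyy Ut k c Hk HU HUy Hheat). }
assert (Hsplit : RInt (fun y => 2 * U y * Ut y * y ^ 2) 0 1
                 = 2 * k * RInt (fun y => U y * G y) 0 1
                   + - 2 * c * RInt (fun y => U y * y ^ 2) 0 1).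
{ rewrite <- RInt_lincomb.
  - apply RInt_ext. intros y _. unfold G. simpl. field. exact Hk.
  - apply ex_RInt_continuous_01. intros y Hy. apply continuous_Rmult; auto.
  - apply ex_RInt_continuous_01. intros y Hy.
    apply continuous_Rmult; [auto | apply continuous_Rpow, continuous_id]. }
assert (Hgrad : RInt (fun y => radial_grad_sq U y * y ^ 2) 0 1
                = RInt (fun y => Uy y ^ 2 * y ^ 2) 0 1).
{ apply RInt_ext. intros y _. unfold radial_grad_sq. now rewrite (is_derive_unique _ _ _ (HU y)). }
unfold ball_int. rewrite Hsplit, Hgreen, Hgrad. ring.
Qed.

Theorem proposition3p4
  (kappa gamma cv Rg cp Tinf pinf sigma mul rhol rhos Rs : R)
  (Hkappa : 0 < kappa) (Hgamma : 1 < gamma) (Hcv : 0 < cv) (HRg : 0 < Rg)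
  (Hcp1 : cp = gamma * cv) (Hcp2 : cp = cv + Rg)
  (HTinf : 0 < Tinf) (Hpinf : 0 < pinf) (Hsigma : 0 < sigma)
  (Hmul : 0 <= mul) (Hrhol : 0 < rhol) (Hrhos : 0 < rhos) (HRs : 0 < Rs)
  (Heq : Rg * Tinf * rhos = pinf + 2 * sigma / Rs)
  (ta tb : R)
  (u uy uyy ut : R -> R -> R)   (* u y t, and its partial derivatives *)
  (Rr dRr ddRr z dz : R -> R)   (* script R, its derivatives, z, z' *)
  (* regularity of u *)
  (Hu_y : forall y t, ta < t < tb -> is_derive (fun s => u s t) y (uy y t))
  (Hu_yy : forall y t, ta < t < tb -> is_derive (fun s => uy s t) y (uyy y t))
  (Hu_t : forall y t, ta < t < tb -> is_derive (fun s => u y s) t (ut y t))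
  (Hu_cont : forall y t, ta < t < tb ->
     continuous (fun p : R * R => u (fst p) (snd p)) (y, t))
  (Huy_cont : forall y t, ta < t < tb ->
     continuous (fun p : R * R => uy (fst p) (snd p)) (y, t))
  (Hut_cont : forall y t, ta < t < tb ->
     continuous (fun p : R * R => ut (fst p) (snd p)) (y, t))
  (* regularity of script R and z *)
  (HR1 : forall t, ta < t < tb -> is_derive Rr t (dRr t))
  (HR2 : forall t, ta < t < tb -> is_derive dRr t (ddRr t))
  (Hz1 : forall t, ta < t < tb -> is_derive z t (dz t))
  (* the linearized system *)
  (Hpde : forall y t, 0 < y <= 1 -> ta < t < tb ->
     ut y t = kappa / (cp * rhos * Rs ^ 2) * radial_laplacian (fun s => u s t) y
              - (1 - 1 / gamma) * dz t)
  (Hbc : forall t, ta < t < tb -> u 1 t = 0)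
  (Hz : forall t, ta < t < tb ->
     z t = 1 / (Rg * Tinf) *
           (- (2 * sigma / Rs ^ 2) * Rr t + 4 * mul / Rs * dRr t + rhol * Rs * ddRr t))
  (Hmass : forall t, ta < t < tb ->
     ball_int (fun y => u y t) = - (4 * PI / 3) * z t - 4 * PI * (rhos / Rs) * Rr t) :
  forall t, ta < t < tb ->
    is_derive
      (fun s => - 4 * PI * sigma * Rr s ^ 2
                - 4 * PI * Rg * Tinf * Rs ^ 2 * Rr s * z s
                - 2 * PI * Rg * Tinf * Rs ^ 3 / (3 * rhos) * z s ^ 2
                + cv * gamma * Tinf * Rs ^ 3 / (2 * rhos) * ball_int (fun y => u y s ^ 2)
                + 2 * PI * rhol * Rs ^ 3 * dRr s ^ 2)
      t
      (- (kappa * Tinf / rhos ^ 2) * Rs * ball_int (radial_grad_sq (fun s => u s t))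
       - 16 * PI * mul * Rs * dRr t ^ 2).
Proof.
intros t Ht.
set (k := kappa / (cp * rhos * Rs ^ 2)).
assert (Hk : k <> 0).
{ unfold k. subst cp. apply Rgt_not_eq, Rdiv_lt_0_compat; [lra |].
  repeat apply Rmult_lt_0_compat; nra. }
pose (L2 := fun s => ball_int (fun y => u y s ^ 2)).
assert (HL2 := is_derive_ball_int_sqr u ut ta tb t Hu_t Hu_cont Hut_cont Ht : is_derive L2 t _).
rewrite (ball_int_heat_dissipation (fun y => u y t) (fun y => uy y t) (fun y => uyy y t)
          (fun y => ut y t) k ((1 - 1 / gamma) * dz t) Hk
          (fun y => Hu_y y t Ht) (fun y => Hu_yy y t Ht)
          (fun y _ => continuous_slice_l ut y t (Hut_cont y t Ht)) (Hbc t Ht)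
          (fun y Hy => Hpde y t Hy Ht)), (Hmass t Ht) in HL2.
(* [auto_derive] can only see the energy of [u] as an opaque function [L2]. *)
apply (is_derive_ext (fun s => - 4 * PI * sigma * Rr s ^ 2
                               - 4 * PI * Rg * Tinf * Rs ^ 2 * Rr s * z s
                               - 2 * PI * Rg * Tinf * Rs ^ 3 / (3 * rhos) * z s ^ 2
                               + cv * gamma * Tinf * Rs ^ 3 / (2 * rhos) * L2 s
                               + 2 * PI * rhol * Rs ^ 3 * dRr s ^ 2)); [reflexivity |].
clearbody L2.
pose proof (HR1 t Ht) as HRt. pose proof (HR2 t Ht) as HdRt. pose proof (Hz1 t Ht) as Hzt.
auto_derive; [repeat split; eexists; eassumption |].
repeat erewrite (is_derive_unique _ t) by eassumption.
rewrite (Hz t Ht). unfold k. subst cp.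
replace Rg with (gamma * cv - cv) by lra.
field. repeat split; nra.
Qed.
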